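(* Let $n\geq 2$ and $M>2n$ be integers, $\Omega>0$, and let $\omega_q=-\Omega+(q-1)h$, $q=1,\dots,M$, with $h=\frac{2\Omega}{M-1}$. Let $\mu=\sum_{j=1}^n a_j\delta_{y_j}$ with $a_j\in\mathbb C\setminus\{0\}$ and pairwise distinct $y_j\in I(n,\Omega):=\big[-\frac{(n-1)\pi}{2\Omega},\frac{(n-1)\pi}{2\Omega}\big]$, and let $m_{\min}=\min_j|a_j|$. Let $\mathbf Y=[\mu]+\mathbf W$ with $\|\mathbf W\|_\infty<\sigma$. Assume $$\min_{p\neq j}|y_p-y_j|\geq \frac{4.4\pi e}{\Omega}\Big(\frac{\sigma}{m_{\min}}\Big)^{\frac{1}{2n-2}}.$$ Then there is no $\sigma$-admissible measure of $\mathbf Y$ with fewer than $n$ supports, i.e. there is no $k<n$, no $\hat a_1,\dots,\hat a_k\in\mathbb C$ and no $\hat y_1,\dots,\hat y_k\in\mathbb R$ such that $\hat\mu=\sum_{j=1}^k\hat a_j\delta_{\hat y_j}$ satisfies $\|[\hat\mu]-\mathbf Y\|_\infty<\sigma$.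
   Context: For a discrete measure $\nu=\sum_j b_j\delta_{x_j}$ on $\mathbb R$, $\mathcal F\nu(\omega)=\sum_j b_je^{ix_j\omega}$ and $[\nu]=(\mathcal F\nu(\omega_1),\dots,\mathcal F\nu(\omega_M))^T\in\mathbb C^M$. A discrete measure $\hat\mu$ is called a $\sigma$-admissible measure of $\mathbf Y$ if $\|[\hat\mu]-\mathbf Y\|_\infty<\sigma$. *)

From Stdlib Require Import Reals Lra Lia List.
Open Scope R_scope.

Definition Cx : Type := (R * R)%type.
Definition C0 : Cx := (0, 0).
Definition Cadd (z w : Cx) : Cx := (fst z + fst w, snd z + snd w).
Definition Csub (z w : Cx) : Cx := (fst z - fst w, snd z - snd w).
Definition Cmul (z w : Cx) : Cx :=
  (fst z * fst w - snd z * snd w, fst z * snd w + snd z * fst w).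
Definition Cmod (z : Cx) : R := sqrt (fst z ^ 2 + snd z ^ 2).
Definition Cexpi (t : R) : Cx := (cos t, sin t).

(* A discrete measure nu = sum_{j=1}^k b_j delta_{x_j}, given by k, b, x
   (indices j = 1..k).  Its Fourier transform at omega:
   F nu (omega) = sum_{j=1}^k b_j e^{i x_j omega}. *)
Definition fourier (k : nat) (b : nat -> Cx) (x : nat -> R) (om : R) : Cx :=
  fold_right (fun j acc => Cadd (Cmul (b j) (Cexpi (x j * om))) acc) C0 (seq 1 k).

Definition omega_q (Om : R) (M q : nat) : R :=
  - Om + (INR q - 1) * (2 * Om / (INR M - 1)).

Definition mmin (n : nat) (a : nat -> Cx) : R :=
  fold_right Rmin (Cmod (a 1%nat)) (map (fun j => Cmod (a j)) (seq 1 n)).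

Definition admissible (Om : R) (M : nat) (Y : nat -> Cx) (sigma : R)
  (k : nat) (b : nat -> Cx) (x : nat -> R) : Prop :=
  forall q : nat, (1 <= q <= M)%nat ->
    Cmod (Csub (fourier k b x (omega_q Om M q)) (Y q)) < sigma.

From Pilot Require Import Defs.
From Stdlib Require Import Reals List Lra Lia Psatz Permutation Classical_Prop.
Require Coquelicot.Coquelicot.
Import ListNotations.
Open Scope R_scope.

(* Suppose a sigma-admissible measure with k < n atoms existed.  Taking every s-th
   frequency gives 2n - 1 equispaced frequencies -Om + l H, (n-1) H <= Om <= 2 (n-1) H,
   at which the two Fourier transforms differ by less than 2 sigma; there the transform
   of mu is sum_p c_p w_p^l with |c_p| = |a_p| and w_p = e^{i y_p H} on an arc of
   length at most PI.  The difference operator prod_z (S - z), z running over the k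
   nodes of the candidate padded by zeros to n - 1 nodes and over the w_p with p <> j,
   annihilates everything but the j-th term and multiplies errors by at most 4^(n-1):
     |c_j| |P(w_j)| |prod_{p<>j} (w_j - w_p)| < 2 sigma 4^(n-1),
   where P is the monic polynomial of degree n-1 with those roots.  The divided
   difference identity sum_j P(w_j) / prod_{p<>j} (w_j - w_p) = 1 provides a j with
   n |P(w_j)| >= |prod_{p<>j} (w_j - w_p)|, so m_min |prod_{p<>j} (w_j - w_p)|^2 <
   2 n sigma 4^(n-1).  Jordan's inequality and a packing argument bound the product
   from below by (d / PI)^(n-1) (n-1)! for node separation d, and Stirling's bound
   k! >= e (k/e)^k turns the assumed separation into the opposite inequality. *)

Module SuperResolution.
Import Coquelicot.Coquelicot.

(** * Elementary estimates *)

Lemma sin_lb_expand (u : R) : sin_lb u = u - u^3/6 + u^5/120 - u^7/5040.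
Proof. unfold sin_lb, sin_approx, sin_term. simpl. field. Qed.

Lemma cos_lb_expand (u : R) : cos_lb u = 1 - u^2/2 + u^4/24 - u^6/720.
Proof. unfold cos_lb, cos_approx, cos_term. simpl. field. Qed.

(* Jordan's inequality: on [0, 1] from the Taylor bound for sin, on [1, PI/2]
   from the Taylor bound for cos at PI/2 - u. *)
Lemma jordan_ineq (u : R) : 0 <= u <= PI/2 -> 2 * u / PI <= sin u.
Proof.
  intros [Hu0 Hu1]. pose proof PI2_3_2. pose proof PI_4.
  apply Rmult_le_reg_r with PI; [lra|].
  replace (2 * u / PI * PI) with (2 * u) by (field; lra).
  destruct (Rle_or_lt u 1) as [Hu|Hu].
  - destruct (SIN u Hu0 ltac:(lra)) as [Hs _]. rewrite sin_lb_expand in Hs.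
    assert (0 <= u^5) by (apply pow_le; lra).
    assert (u^7 = u^5 * (u * u)) by ring.
    assert (u * u <= 1) by nra.
    assert (u - u^3/6 <= sin u) by nra.
    assert (u^3 <= u) by (simpl; nra).
    assert (5 * u / 6 <= sin u) by lra.
    nra.
  - set (v := PI/2 - u).
    assert (Hv : 0 <= v <= PI/2 - 1) by (unfold v; lra).
    replace u with (PI/2 - v) by (unfold v; lra). rewrite sin_shift.
    destruct (COS v ltac:(lra) ltac:(lra)) as [Hc _]. rewrite cos_lb_expand in Hc.
    assert (0 <= v^4) by (apply pow_le; lra).
    assert (v^6 = v^4 * (v * v)) by ring.
    assert (v * v <= 1) by nra.
    assert (1 - v^2/2 <= cos v) by nra.
    assert (v * PI <= 4) by nra.
    nra.
Qed.

Lemma Rabs_sin_ge (x : R) : Rabs x <= PI/2 -> 2 * Rabs x / PI <= Rabs (sin x).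
Proof.
  intros Hx. pose proof PI_RGT_0.
  destruct (Rle_or_lt 0 x) as [H0|H0].
  - rewrite Rabs_right in * by lra. pose proof (jordan_ineq x ltac:(lra)).
    assert (0 <= 2 * x / PI) by (apply Rmult_le_pos; [lra|left; apply Rinv_0_lt_compat; lra]).
    rewrite Rabs_right; lra.
  - rewrite Rabs_left in * by lra. pose proof (jordan_ineq (- x) ltac:(lra)).
    rewrite sin_neg in H1.
    assert (0 <= 2 * - x / PI) by (apply Rmult_le_pos; [lra|left; apply Rinv_0_lt_compat; lra]).
    rewrite Rabs_left1; lra.
Qed.

Lemma exp1_ge_27_10 : 27/10 <= exp 1.
Proof.
  pose proof (exp_ge_taylor 1 5 ltac:(lra)) as H. simpl in H.
  eapply Rle_trans; [|exact H]. lra.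
Qed.

Lemma pow_exp (x : R) (k : nat) : exp x ^ k = exp (INR k * x).
Proof.
  induction k as [|k IH]; [simpl; rewrite Rmult_0_l, exp_0; reflexivity|].
  rewrite S_INR. simpl pow. rewrite IH, <- exp_plus. f_equal. ring.
Qed.

Lemma pow_one_plus_inv_le_exp1 (k : nat) : (0 < k)%nat -> (1 + 1 / INR k) ^ k <= exp 1.
Proof.
  intros Hk. assert (0 < INR k) by (apply lt_0_INR; lia).
  replace (exp 1) with (exp (1 / INR k) ^ k) by (rewrite pow_exp; f_equal; field; lra).
  apply pow_incr. split; [|apply exp_ineq1_le].
  assert (0 < 1 / INR k) by (apply Rdiv_lt_0_compat; lra). lra.
Qed.

Lemma exp1_mul_pow_le_fact (k : nat) :
  (1 <= k)%nat -> exp 1 * INR k ^ k <= exp 1 ^ k * INR (Factorial.fact k).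
Proof.
  induction k as [|k IH]; intros Hk; [lia|].
  destruct (Nat.eq_dec k 0) as [->|Hk0]; [simpl; lra|].
  specialize (IH ltac:(lia)).
  assert (Hkpos : 0 < INR k) by (apply lt_0_INR; lia).
  pose proof (pow_one_plus_inv_le_exp1 k ltac:(lia)) as He.
  pose proof (exp_pos 1).
  assert (HS : INR (S k) ^ k = INR k ^ k * (1 + 1 / INR k) ^ k).
  { rewrite <- Rpow_mult_distr, S_INR. f_equal. field. lra. }
  assert (0 <= INR k ^ k) by (apply pow_le; lra).
  replace (INR (S k) ^ S k) with (INR (S k) * INR (S k) ^ k) by reflexivity.
  replace (Factorial.fact (S k)) with (S k * Factorial.fact k)%nat by reflexivity.
  rewrite mult_INR, HS. simpl pow.
  replace (exp 1 * (INR (S k) * (INR k ^ k * (1 + 1 / INR k) ^ k)))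
    with (INR (S k) * ((exp 1 * INR k ^ k) * (1 + 1 / INR k) ^ k)) by ring.
  replace (exp 1 * exp 1 ^ k * (INR (S k) * INR (Factorial.fact k)))
    with (INR (S k) * ((exp 1 ^ k * INR (Factorial.fact k)) * exp 1)) by ring.
  apply Rmult_le_compat_l; [apply pos_INR|].
  assert (0 <= exp 1 * INR k ^ k) by (apply Rmult_le_pos; lra).
  apply Rmult_le_compat; try lra. apply pow_le.
  assert (0 < 1 / INR k) by (apply Rdiv_lt_0_compat; lra). lra.
Qed.

Lemma pow_121_100_ge (k : nat) :
  1 + 21/100 * INR k + 2205/100000 * INR k * (INR k - 1) <= (121/100) ^ k.
Proof.
  induction k as [|k IH]; [simpl; lra|].
  rewrite S_INR. simpl pow.
  assert (0 <= INR k * (INR k - 1)).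
  { destruct k; [simpl; lra|]. rewrite S_INR. pose proof (pos_INR k). nra. }
  nra.
Qed.

(* The numerical inequality behind the constant 4.4 = 2 * 2.2 of the separation. *)
Lemma succ_four_pow_le_fact_sq (k : nat) : (1 <= k)%nat ->
  2 * INR (k + 1) * 4 ^ k <= (22/10 * exp 1 / INR k) ^ (2 * k) * INR (Factorial.fact k) ^ 2.
Proof.
  intros Hk.
  assert (Hkp : 0 < INR k) by (apply lt_0_INR; lia).
  assert (Hkk : 0 < INR k ^ k) by (apply pow_lt; lra).
  pose proof exp1_ge_27_10. pose proof (exp1_mul_pow_le_fact k Hk) as F.
  assert (Hroot : (22/10) ^ k * exp 1 <= (22/10 * exp 1 / INR k) ^ k * INR (Factorial.fact k)).
  { set (c := 22/10). assert (0 < c) by (unfold c; lra).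
    unfold Rdiv. rewrite !Rpow_mult_distr, pow_inv.
    apply Rmult_le_reg_r with (INR k ^ k); [lra|].
    replace (c ^ k * exp 1 ^ k * / INR k ^ k * INR (Factorial.fact k) * INR k ^ k)
      with (c ^ k * (exp 1 ^ k * INR (Factorial.fact k))) by (field; lra).
    rewrite Rmult_assoc. apply Rmult_le_compat_l; [apply pow_le; lra|lra]. }
  replace (2 * k)%nat with (k * 2)%nat by lia. rewrite pow_mult, <- Rpow_mult_distr.
  assert (0 <= (22/10) ^ k * exp 1) by (apply Rmult_le_pos; [apply pow_le|]; lra).
  apply Rle_trans with (((22/10) ^ k * exp 1) ^ 2); [|apply pow_incr; lra].
  replace (((22/10) ^ k * exp 1) ^ 2) with (4 ^ k * ((121/100) ^ k * (exp 1 * exp 1))).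
  2:{ replace 4 with (2 * 2) by lra. replace (121/100) with ((11/10) * (11/10)) by lra.
      replace (22/10) with (2 * (11/10)) by lra. rewrite !Rpow_mult_distr. ring. }
  rewrite (Rmult_comm (2 * _)). apply Rmult_le_compat_l; [apply pow_le; lra|].
  pose proof (pow_121_100_ge k). rewrite plus_INR. simpl (INR 1).
  assert (729/100 <= exp 1 * exp 1) by nra.
  pose proof (pos_INR k). assert (0 <= (121/100) ^ k) by (apply pow_le; lra).
  nra.
Qed.

(** * Products of distances between separated points *)

Definition rprod (I : list nat) (g : nat -> R) : R := fold_right (fun p acc => g p * acc) 1 I.

Lemma rprod_perm (I J : list nat) (g : nat -> R) : Permutation I J -> rprod I g = rprod J g.
Proof. induction 1; simpl; [reflexivity|congruence|ring|congruence]. Qed.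

Lemma rprod_ge0 (I : list nat) (g : nat -> R) : (forall p, In p I -> 0 <= g p) -> 0 <= rprod I g.
Proof.
  induction I as [|p I IH]; simpl; intros H; [lra|].
  apply Rmult_le_pos; [apply H|apply IH]; auto.
Qed.

Lemma rprod_le_compat (I : list nat) (f g : nat -> R) :
  (forall p, In p I -> 0 <= f p <= g p) -> rprod I f <= rprod I g.
Proof.
  induction I as [|p I IH]; simpl; intros H; [lra|].
  pose proof (H p (or_introl eq_refl)).
  assert (0 <= rprod I f) by (apply rprod_ge0; intros q Hq; apply H; auto).
  apply Rmult_le_compat; try lra. apply IH. auto.
Qed.

Lemma rprod_scale (I : list nat) (f : nat -> R) (c : R) :
  rprod I (fun p => c * f p) = c ^ length I * rprod I f.
Proof. induction I; simpl; [ring|]. rewrite IHI. ring. Qed.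

Lemma exists_min_perm {A : Type} (f : A -> R) (I : list A) : I <> [] ->
  exists m I', Permutation I (m :: I') /\ forall p, In p I' -> f m <= f p.
Proof.
  induction I as [|x I IH]; intros Hne; [congruence|].
  destruct I as [|y I0].
  - exists x, []. split; [apply Permutation_refl|intros p []].
  - destruct (IH ltac:(discriminate)) as (m & I' & Hp & Hm).
    destruct (Rle_dec (f x) (f m)).
    + exists x, (y :: I0). split; [apply Permutation_refl|].
      intros p Hin. apply (Permutation_in _ Hp) in Hin.
      destruct Hin as [<-|Hin]; [lra|specialize (Hm p Hin); lra].
    + exists m, (x :: I'). split.
      * eapply perm_trans; [apply perm_skip; exact Hp|apply perm_swap].
      * intros p [<-|Hin]; [lra|auto].
Qed.

Definition separated (t : nat -> R) (d : R) (I : list nat) : Prop :=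
  forall p q, In p I -> In q I -> p <> q -> d <= Rabs (t p - t q).

Lemma separated_incl (t : nat -> R) (d : R) (I J : list nat) :
  incl J I -> separated t d I -> separated t d J.
Proof. intros Hi Hs p q Hp Hq. apply Hs; auto. Qed.

Lemma perm_cons_decompose {A : Type} (m : A) (I I' : list A) : NoDup I -> Permutation I (m :: I') ->
  In m I /\ incl I' I /\ ~ In m I' /\ NoDup I' /\ length I = S (length I').
Proof.
  intros Hnd Hp.
  assert (Hnd' : NoDup (m :: I')) by (eapply Permutation_NoDup; eauto).
  inversion Hnd'; subst.
  repeat split; auto.
  - apply (Permutation_in m (Permutation_sym Hp)); left; auto.
  - intros p Hin. apply (Permutation_in p (Permutation_sym Hp)). right; auto.
  - apply Permutation_length in Hp. exact Hp.
Qed.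

Lemma separated_length_le (t : nat -> R) (d : R) : 0 < d -> forall I a b, NoDup I -> I <> [] ->
  (forall p, In p I -> a <= t p <= b) -> separated t d I ->
  INR (length I) * d <= b - a + d.
Proof.
  intros Hd I. remember (length I) as N. revert I HeqN.
  induction N as [|N IH]; intros I HN a b Hnd Hne Hab Hs; [destruct I; [congruence|discriminate]|].
  destruct (exists_min_perm t I Hne) as (m & I' & Hp & Hm).
  destruct (perm_cons_decompose m I I' Hnd Hp) as (HmI & HI' & HmI' & Hnd' & Hlen).
  rewrite S_INR. pose proof (Hab m HmI).
  destruct I' as [|z I'']; [simpl in Hlen; assert (N = 0)%nat by lia; subst N; simpl; lra|].
  assert (Hgt : forall p, In p (z :: I'') -> t m + d <= t p).
  { intros p Hin. assert (p <> m) by (intro; subst; contradiction).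
    pose proof (Hs p m (HI' p Hin) HmI H0). pose proof (Hm p Hin).
    unfold Rabs in *; destruct (Rcase_abs (t p - t m)); lra. }
  pose proof (IH (z :: I'') ltac:(lia) (t m + d) b Hnd' ltac:(discriminate)
    ltac:(intros p Hin; split; [apply Hgt|apply Hab, HI']; auto)
    (separated_incl t d I _ HI' Hs)).
  lra.
Qed.

Lemma separated_length_le_radius (t : nat -> R) (d D : R) (j : nat) (I : list nat) :
  0 < d -> 0 <= D -> NoDup I -> ~ In j I -> separated t d (j :: I) ->
  (forall p, In p I -> Rabs (t p - t j) <= D) -> INR (length I) * d <= 2 * D.
Proof.
  intros Hd HD0 Hnd HjI Hs HD.
  set (above := fun p => if Rlt_dec (t j) (t p) then true else false).
  rewrite <- (filter_length above I), plus_INR.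
  assert (Hsj : forall p, In p I -> d <= Rabs (t p - t j)).
  { intros p Hp. apply Hs; simpl; auto. intro; subst; contradiction. }
  assert (Hside : forall (f : nat -> bool) lo hi,
    (forall p, In p I -> f p = true -> lo <= t p <= hi) -> hi - lo + d <= D ->
    INR (length (filter f I)) * d <= D).
  { intros f lo hi Hr Hw. destruct (filter f I) as [|z l] eqn:E; [simpl; lra|].
    rewrite <- E.
    pose proof (separated_length_le t d Hd (filter f I) lo hi (NoDup_filter _ Hnd)
      ltac:(rewrite E; discriminate)
      ltac:(intros p Hp; apply filter_In in Hp; apply Hr; tauto)
      ltac:(eapply separated_incl; [|exact Hs]; intros p Hp; right; apply filter_In in Hp; tauto)).
    lra. }
  assert (Habove : INR (length (filter above I)) * d <= D).
  { apply (Hside above (t j + d) (t j + D)); [|lra].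
    intros p Hp Hf. unfold above in Hf. destruct (Rlt_dec (t j) (t p)); [|discriminate].
    pose proof (Hsj p Hp). pose proof (HD p Hp).
    unfold Rabs in *. destruct (Rcase_abs (t p - t j)); lra. }
  assert (Hbelow : INR (length (filter (fun p => negb (above p)) I)) * d <= D).
  { apply (Hside _ (t j - D) (t j - d)); [|lra].
    intros p Hp Hf. unfold above in Hf. destruct (Rlt_dec (t j) (t p)); [discriminate|].
    pose proof (Hsj p Hp). pose proof (HD p Hp).
    unfold Rabs in *. destruct (Rcase_abs (t p - t j)); lra. }
  lra.
Qed.

(* Peel off the point farthest from t j: by packing it lies at distance at least N d / 2. *)
Lemma rprod_dist_ge_fact (t : nat -> R) (d : R) (j : nat) : 0 < d -> forall I,
  NoDup I -> ~ In j I -> separated t d (j :: I) ->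
  (d/2) ^ length I * INR (Factorial.fact (length I)) <= rprod I (fun p => Rabs (t p - t j)).
Proof.
  intros Hd I. remember (length I) as N. revert I HeqN.
  induction N as [|N IH]; intros I HN Hnd HjI Hs.
  { destruct I; [|discriminate]. simpl. lra. }
  assert (Hne : I <> []) by (intro; subst; discriminate).
  destruct (exists_min_perm (fun p => - Rabs (t p - t j)) I Hne) as (m & I' & Hp & Hm).
  destruct (perm_cons_decompose m I I' Hnd Hp) as (HmI & HI' & HmI' & Hnd' & Hlen).
  set (D := Rabs (t m - t j)).
  assert (HD : forall p, In p I -> Rabs (t p - t j) <= D).
  { intros p Hin. apply (Permutation_in p Hp) in Hin.
    destruct Hin as [<-|Hin]; [unfold D; lra|specialize (Hm p Hin); unfold D; lra]. }
  pose proof (separated_length_le_radius t d D j I Hd (Rabs_pos _) Hnd HjI Hs HD) as Hfar.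
  rewrite <- HN, S_INR in Hfar.
  pose proof (IH I' ltac:(lia) Hnd' ltac:(intro; apply HjI; auto)
    ltac:(eapply separated_incl; [|exact Hs]; intros p [<-|Hin]; [left|right]; auto)) as HIH.
  rewrite (rprod_perm _ _ _ Hp). simpl. fold D.
  assert (N = length I') by lia. subst N.
  rewrite plus_INR, mult_INR.
  replace (d / 2 * (d / 2) ^ length I' *
           (INR (Factorial.fact (length I')) + INR (length I') * INR (Factorial.fact (length I'))))
    with ((d / 2 * (INR (length I') + 1)) * ((d / 2) ^ length I' * INR (Factorial.fact (length I'))))
    by ring.
  assert (0 <= (d / 2) ^ length I' * INR (Factorial.fact (length I')))
    by (apply Rmult_le_pos; [apply pow_le; lra|apply pos_INR]).
  pose proof (pos_INR (length I')).
  apply Rmult_le_compat; [nra|lra|lra|exact HIH].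
Qed.

(** * Divided differences *)

Local Open Scope C_scope.

Definition csum (I : list nat) (F : nat -> C) : C := fold_right (fun j acc => F j + acc) 0 I.
Definition cprod (I : list nat) (g : nat -> C) : C := fold_right (fun p acc => g p * acc) 1 I.
Definition others (j : nat) (I : list nat) : list nat := filter (fun p => negb (Nat.eqb p j)) I.

Lemma csum_perm (I J : list nat) (F : nat -> C) : Permutation I J -> csum I F = csum J F.
Proof. induction 1; simpl; [reflexivity|congruence|ring|congruence]. Qed.

Lemma cprod_perm (I J : list nat) (g : nat -> C) : Permutation I J -> cprod I g = cprod J g.
Proof. induction 1; simpl; [reflexivity|congruence|ring|congruence]. Qed.

Lemma Permutation_filter {A : Type} (f : A -> bool) (l l' : list A) :
  Permutation l l' -> Permutation (filter f l) (filter f l').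
Proof.
  induction 1; simpl.
  - constructor.
  - destruct (f x); auto.
  - destruct (f x), (f y); try constructor; apply Permutation_refl.
  - eapply perm_trans; eauto.
Qed.

Lemma csum_ext (I : list nat) (F G : nat -> C) :
  (forall j, In j I -> F j = G j) -> csum I F = csum I G.
Proof. induction I; simpl; intros H; [reflexivity|]. rewrite H, IHI; auto. Qed.

Lemma csum_add (I : list nat) (F G : nat -> C) :
  csum I (fun j => F j + G j) = csum I F + csum I G.
Proof. induction I; simpl; [ring|]. rewrite IHI. ring. Qed.

Lemma csum_scale (I : list nat) (F : nat -> C) (k : C) :
  csum I (fun j => k * F j) = k * csum I F.
Proof. induction I; simpl; [ring|]. rewrite IHI. ring. Qed.

Lemma csum_eq0 (I : list nat) (F : nat -> C) : (forall j, In j I -> F j = 0) -> csum I F = 0.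
Proof. induction I; simpl; intros H; [reflexivity|]. rewrite H, IHI; auto. ring. Qed.

Lemma csum_single (I : list nat) (F : nat -> C) (j : nat) : NoDup I -> In j I ->
  (forall p, In p I -> p <> j -> F p = 0) -> csum I F = F j.
Proof.
  induction I as [|x I IH]; intros Hnd Hj H; [destruct Hj|].
  inversion Hnd; subst. simpl.
  destruct Hj as [<-|Hj].
  - rewrite csum_eq0; [ring|]. intros p Hp. apply H; simpl; auto. intro; subst; contradiction.
  - rewrite H, IH; simpl; auto; [ring| |]. intros p Hp Hpj. apply H; simpl; auto.
    intro; subst; contradiction.
Qed.

Lemma Cmod_csum_lt (I : list nat) (F : nat -> C) (c : R) : I <> [] ->
  (forall j, In j I -> Cmod (F j) < c)%R -> (Cmod (csum I F) < INR (length I) * c)%R.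
Proof.
  induction I as [|x I IH]; intros Hne H; [congruence|].
  simpl csum. simpl length. rewrite S_INR.
  eapply Rle_lt_trans; [apply Cmod_triangle|].
  pose proof (H x (or_introl eq_refl)).
  destruct I as [|y I']; [simpl; rewrite Cmod_0; lra|].
  pose proof (IH ltac:(discriminate) (fun j Hj => H j (or_intror Hj))). lra.
Qed.

Lemma csum_exists_large (I : list nat) (F : nat -> C) : I <> [] -> (1 <= Cmod (csum I F))%R ->
  exists j, In j I /\ (1 <= INR (length I) * Cmod (F j))%R.
Proof.
  intros Hne H1.
  assert (Hn : (0 < INR (length I))%R) by (apply lt_0_INR; destruct I; [congruence|simpl; lia]).
  destruct (classic (exists j, In j I /\ (1 / INR (length I) <= Cmod (F j))%R)) as [(j & Hj & Hle)|Hall].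
  - exists j. split; auto. apply Rmult_le_compat_l with (r := INR (length I)) in Hle; [|lra].
    replace (INR (length I) * (1 / INR (length I)))%R with 1%R in Hle by (field; lra). exact Hle.
  - exfalso. assert (Hlt : forall j, In j I -> (Cmod (F j) < 1 / INR (length I))%R).
    { intros j Hj. apply Rnot_le_lt. intro. apply Hall. eauto. }
    pose proof (Cmod_csum_lt I F _ Hne Hlt).
    replace (INR (length I) * (1 / INR (length I)))%R with 1%R in H by (field; lra). lra.
Qed.

Lemma Cmod_cprod (I : list nat) (g : nat -> C) : Cmod (cprod I g) = rprod I (fun p => Cmod (g p)).
Proof. induction I; simpl; [apply Cmod_1|]. rewrite Cmod_mult, IHI. reflexivity. Qed.

Lemma cprod_neq0 (I : list nat) (g : nat -> C) : (forall p, In p I -> g p <> 0) -> cprod I g <> 0.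
Proof.
  induction I as [|p I IH]; simpl; intros H.
  - apply C1_nz.
  - apply Cmult_neq_0; [apply H|apply IH]; auto.
Qed.

Lemma Csub_eq0 (a b : C) : a - b = 0 -> a = b.
Proof. intros H. replace a with ((a - b) + b) by ring. rewrite H. ring. Qed.

Lemma in_others (j p : nat) (I : list nat) : In p (others j I) <-> In p I /\ p <> j.
Proof.
  unfold others. rewrite filter_In, Bool.negb_true_iff, Nat.eqb_neq. tauto.
Qed.

Lemma others_notin (j : nat) (I : list nat) : ~ In j I -> others j I = I.
Proof.
  induction I as [|x I IH]; intros Hj; [reflexivity|]. unfold others; simpl.
  destruct (Nat.eqb_spec x j) as [->|Hx]; [exfalso; apply Hj; left; auto|].
  simpl. f_equal. apply IH. intro; apply Hj; right; auto.
Qed.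

Lemma length_others (j : nat) (I : list nat) : NoDup I -> In j I ->
  length (others j I) = (length I - 1)%nat.
Proof.
  induction I as [|x I IH]; intros Hnd Hj; [destruct Hj|].
  inversion Hnd; subst. unfold others; simpl. fold (others j I).
  destruct (Nat.eqb_spec x j) as [->|Hx]; simpl.
  - rewrite others_notin; auto. lia.
  - destruct Hj as [->|Hj]; [contradiction|]. rewrite IH; auto.
    destruct I; [destruct Hj|simpl; lia].
Qed.

Definition injective_on (x : nat -> C) (I : list nat) : Prop :=
  forall p q, In p I -> In q I -> x p = x q -> p = q.

Lemma injective_on_incl (x : nat -> C) (I J : list nat) :
  incl J I -> injective_on x I -> injective_on x J.
Proof. intros Hi H p q Hp Hq. apply H; auto. Qed.

Lemma Csub_neq0_of_injective (x : nat -> C) (I : list nat) (p q : nat) :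
  injective_on x I -> In p I -> In q I -> p <> q -> x p - x q <> 0.
Proof. intros Hinj Hp Hq Hpq E. apply Hpq, Hinj; auto. apply Csub_eq0; auto. Qed.


Definition divdiff (x : nat -> C) (I : list nat) (F : C -> C) : C :=
  csum I (fun j => F (x j) / cprod (others j I) (fun p => x j - x p)).

Definition root_prod (us : list C) (z : C) : C := fold_right (fun u acc => (z - u) * acc) 1 us.

Lemma divdiff_ext (x : nat -> C) (I : list nat) (F G : C -> C) :
  (forall z, F z = G z) -> divdiff x I F = divdiff x I G.
Proof. intros H. apply csum_ext. intros j _. rewrite H. reflexivity. Qed.

Lemma divdiff_add (x : nat -> C) (I : list nat) (F G : C -> C) :
  divdiff x I (fun z => F z + G z) = divdiff x I F + divdiff x I G.
Proof. unfold divdiff. rewrite <- csum_add. apply csum_ext. intros. unfold Cdiv. ring. Qed.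

Lemma divdiff_scale (x : nat -> C) (I : list nat) (F : C -> C) (k : C) :
  divdiff x I (fun z => k * F z) = k * divdiff x I F.
Proof. unfold divdiff. rewrite <- csum_scale. apply csum_ext. intros. unfold Cdiv. ring. Qed.

Lemma divdiff_perm (x : nat -> C) (I J : list nat) (F : C -> C) :
  Permutation I J -> divdiff x I F = divdiff x J F.
Proof.
  intros HP. unfold divdiff. rewrite (csum_perm _ _ _ HP). apply csum_ext. intros j _.
  unfold others. rewrite (cprod_perm _ _ _ (Permutation_filter _ _ _ HP)). reflexivity.
Qed.

Lemma divdiff_cons_factor (x : nat -> C) (c : nat) (I : list nat) (G : C -> C) :
  NoDup (c :: I) -> injective_on x (c :: I) ->
  divdiff x (c :: I) (fun z => (z - x c) * G z) = divdiff x I G.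
Proof.
  intros Hnd Hinj. inversion Hnd as [|? ? HcI HndI]; subst.
  unfold divdiff. simpl. replace (x c - x c) with (RtoC 0) by ring.
  rewrite Cmult_0_l. unfold Cdiv at 1. rewrite Cmult_0_l, Cplus_0_l.
  apply csum_ext. intros j Hj.
  assert (Hcj : c <> j) by (intro; subst; contradiction).
  unfold others at 1. simpl. destruct (Nat.eqb_spec c j) as [|_]; [contradiction|].
  simpl. fold (others j I).
  assert (Hne : x j - x c <> 0) by (apply (Csub_neq0_of_injective x (c :: I)); simpl; auto).
  assert (Hp : cprod (others j I) (fun p => x j - x p) <> 0).
  { apply cprod_neq0. intros p Hp. apply in_others in Hp.
    apply (Csub_neq0_of_injective x (c :: I)); simpl; intuition. }
  field. split; auto.
Qed.

Lemma divdiff_const1 (x : nat -> C) : forall I, NoDup I -> injective_on x I -> I <> [] ->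
  divdiff x I (fun _ => 1) = if Nat.eqb (length I) 1 then 1 else 0.
Proof.
  intros I. remember (length I) as N. revert I HeqN.
  induction N as [|N IH]; intros I HN Hnd Hinj Hne; [destruct I; [congruence|discriminate]|].
  destruct I as [|c [|c' I]]; [congruence| |].
  - simpl in HN. injection HN as ->. unfold divdiff, others. simpl. rewrite Nat.eqb_refl. simpl.
    field.
  - simpl in HN. injection HN as ->.
    assert (Hcc : x c' - x c <> 0).
    { apply (Csub_neq0_of_injective x (c :: c' :: I)); simpl; auto.
      intro; subst; inversion Hnd; simpl in *; tauto. }
    (* 1 = ((z - x c) - (z - x c')) / (x c' - x c) *)
    rewrite (divdiff_ext x _ _ (fun z => / (x c' - x c) * ((z - x c) * 1 + (-1) * ((z - x c') * 1)))).
    2:{ intros z. field. auto. }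
    rewrite divdiff_scale, divdiff_add, divdiff_scale, divdiff_cons_factor by auto.
    rewrite (divdiff_perm x (c :: c' :: I) (c' :: c :: I)) by constructor.
    inversion Hnd as [|? ? H1 H2]; subst. inversion H2; subst.
    rewrite divdiff_cons_factor.
    2:{ constructor; [|constructor; [intro; apply H1; right|]; auto].
        intros [E|E]; [apply H1; left; symmetry; exact E|contradiction]. }
    2:{ eapply injective_on_incl; [|exact Hinj]. intros p Hp. simpl in *; tauto. }
    rewrite (IH (c' :: I)), (IH (c :: I)); simpl; auto; try discriminate.
    + ring.
    + constructor; auto. intro; apply H1; simpl; auto.
    + eapply injective_on_incl; [|exact Hinj]. intros p Hp. simpl in *; tauto.
    + eapply injective_on_incl; [|exact Hinj]. intros p Hp. simpl in *; tauto.
Qed.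

Lemma divdiff_root_prod (x : nat -> C) : forall us I, NoDup I -> injective_on x I -> I <> [] ->
  (length us < length I)%nat ->
  divdiff x I (root_prod us) = if Nat.eqb (S (length us)) (length I) then 1 else 0.
Proof.
  induction us as [|u us IH]; intros I Hnd Hinj Hne Hlt.
  { change (divdiff x I (fun _ => 1) = if Nat.eqb 1 (length I) then 1 else 0).
    rewrite Nat.eqb_sym. apply (divdiff_const1 x I Hnd Hinj Hne). }
  destruct I as [|c I]; [congruence|].
  rewrite (divdiff_ext x _ _ (fun z => (z - x c) * root_prod us z + (x c - u) * root_prod us z)).
  2:{ intros z. simpl. ring. }
  rewrite divdiff_add, divdiff_scale, divdiff_cons_factor by auto.
  simpl in Hlt. inversion Hnd; subst.
  rewrite (IH I), (IH (c :: I)); auto; try (simpl; lia).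
  - cbn [length].
    destruct (Nat.eqb_spec (S (length us)) (S (length I))) as [E1|E1]; [lia|].
    destruct (Nat.eqb_spec (S (S (length us))) (S (length I)));
    destruct (Nat.eqb_spec (S (length us)) (length I)); try lia; ring.
  - eapply injective_on_incl; [|exact Hinj]. intros p Hp. simpl; auto.
  - destruct I; simpl in Hlt; [lia|discriminate].
Qed.


(** * Difference operators on exponential sums *)

Lemma root_prod_app (us vs : list C) (z : C) : root_prod (us ++ vs) z = root_prod us z * root_prod vs z.
Proof. induction us; simpl; [ring|]. rewrite IHus. ring. Qed.

Lemma root_prod_eq0 (us : list C) (z : C) : In z us -> root_prod us z = 0.
Proof.
  induction us as [|u us IH]; simpl; [intros []|].
  intros [<-|H]; [ring|]. rewrite IH; auto. ring.
Qed.

Lemma root_prod_map (w : nat -> C) (L : list nat) (z : C) :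
  root_prod (map w L) z = cprod L (fun p => z - w p).
Proof. induction L; simpl; [reflexivity|]. rewrite IHL. reflexivity. Qed.

(* [diff_ops zs] is the difference operator prod_{z in zs} (S - z), S the shift;
   it maps the geometric sequence w^l to root_prod zs w * w^l. *)
Definition diff_op (z : C) (u : nat -> C) : nat -> C := fun l => u (S l) - z * u l.

Fixpoint diff_ops (zs : list C) (u : nat -> C) : nat -> C :=
  match zs with [] => u | z :: zs' => diff_op z (diff_ops zs' u) end.

Lemma diff_ops_ext (zs : list C) (u v : nat -> C) :
  (forall l, u l = v l) -> forall l, diff_ops zs u l = diff_ops zs v l.
Proof. intros H. induction zs; simpl; auto. unfold diff_op. intros l. rewrite !IHzs. reflexivity. Qed.

Lemma diff_ops_add (zs : list C) (u v : nat -> C) (l : nat) :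
  diff_ops zs (fun l => u l + v l) l = diff_ops zs u l + diff_ops zs v l.
Proof. revert l. induction zs; simpl; auto. unfold diff_op. intros l. rewrite !IHzs. ring. Qed.

Lemma diff_ops_scale (zs : list C) (u : nat -> C) (k : C) (l : nat) :
  diff_ops zs (fun l => k * u l) l = k * diff_ops zs u l.
Proof. revert l. induction zs; simpl; auto. unfold diff_op. intros l. rewrite !IHzs. ring. Qed.

Lemma diff_ops_exp_sum (zs : list C) (I : list nat) (c w : nat -> C) (l : nat) :
  diff_ops zs (fun l => csum I (fun p => c p * w p ^ l)) l =
  csum I (fun p => c p * root_prod zs (w p) * w p ^ l).
Proof.
  revert l. induction I as [|p I IH]; intros l; simpl.
  - clear. revert l. induction zs as [|z zs IH]; intros l; simpl; [reflexivity|].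
    unfold diff_op. rewrite !IH. ring.
  - rewrite diff_ops_add, IH. f_equal. clear. revert l.
    induction zs as [|z zs IH]; intros l; simpl; [ring|]. unfold diff_op. rewrite !IH. simpl. ring.
Qed.

Definition root_weight (zs : list C) : R := fold_right (fun z acc => (1 + Cmod z) * acc)%R 1%R zs.

Lemma root_weight_pos (zs : list C) : (0 < root_weight zs)%R.
Proof.
  induction zs; simpl; [lra|]. pose proof (Cmod_ge_0 a). apply Rmult_lt_0_compat; lra.
Qed.

Lemma root_weight_le_pow2 (zs : list C) :
  (forall z, In z zs -> (Cmod z <= 1)%R) -> (root_weight zs <= 2 ^ length zs)%R.
Proof.
  induction zs as [|z zs IH]; simpl; intros H; [lra|].
  pose proof (Cmod_ge_0 z). pose proof (root_weight_pos zs). pose proof (H z (or_introl eq_refl)).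
  apply Rmult_le_compat; try lra. apply IH. auto.
Qed.

Lemma diff_ops_bound (zs : list C) : forall (N : nat) (B : R) (u : nat -> C),
  (forall l, (l <= N + length zs)%nat -> (Cmod (u l) < B)%R) ->
  forall l, (l <= N)%nat -> (Cmod (diff_ops zs u l) < B * root_weight zs)%R.
Proof.
  induction zs as [|z zs IH]; intros N B u H l Hl.
  - simpl. rewrite Rmult_1_r. apply H. lia.
  - simpl. unfold diff_op.
    pose proof (IH (S N) B u ltac:(intros l' Hl'; apply H; simpl; lia)) as H'.
    pose proof (H' (S l) ltac:(lia)). pose proof (H' l ltac:(lia)).
    eapply Rle_lt_trans; [apply (Cmod_triangle _ (- (z * diff_ops zs u l)))|].
    rewrite Cmod_opp, Cmod_mult. pose proof (Cmod_ge_0 z).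
    assert (Cmod z * Cmod (diff_ops zs u l) <= Cmod z * (B * root_weight zs))%R
      by (apply Rmult_le_compat_l; lra).
    nra.
Qed.

Lemma diff_ops_exp_sum_isolate (zs : list C) (I J : list nat) (c w ch wh : nat -> C) (j : nat) :
  NoDup I -> In j I -> (forall p, In p I -> p <> j -> In (w p) zs) ->
  (forall i, In i J -> In (wh i) zs) ->
  diff_ops zs (fun l => csum I (fun p => c p * w p ^ l) - csum J (fun i => ch i * wh i ^ l)) 0
  = c j * root_prod zs (w j).
Proof.
  intros Hnd Hj Hw Hwh.
  rewrite (diff_ops_ext zs _ (fun l => csum I (fun p => c p * w p ^ l)
                                 + (-1) * csum J (fun i => ch i * wh i ^ l))).
  2:{ intros l. ring. }
  rewrite diff_ops_add, diff_ops_scale, !diff_ops_exp_sum.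
  rewrite (csum_eq0 J); [|intros i Hi; rewrite root_prod_eq0; [ring|auto]].
  rewrite (csum_single I _ j Hnd Hj); [simpl; ring|].
  intros p Hp Hpj. rewrite root_prod_eq0; [ring|auto].
Qed.

(* Some node w j carries at least a 1/n share of the divided difference, which equals 1. *)
Lemma exists_node_root_prod_ge (I : list nat) (w : nat -> C) (us : list C) :
  NoDup I -> injective_on w I -> I <> [] -> length us = (length I - 1)%nat ->
  exists j, In j I /\ cprod (others j I) (fun p => w j - w p) <> 0 /\
    (Cmod (cprod (others j I) (fun p => w j - w p)%C)
       <= INR (length I) * Cmod (root_prod us (w j)))%R.
Proof.
  intros Hnd Hinj Hne Hus.
  assert (HI : (1 <= length I)%nat) by (destruct I; [congruence|simpl; lia]).
  assert (Hdd : divdiff w I (root_prod us) = 1).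
  { rewrite divdiff_root_prod; auto; [|lia]. rewrite Hus.
    replace (S (length I - 1)) with (length I) by lia.
    rewrite Nat.eqb_refl. reflexivity. }
  destruct (csum_exists_large I _ Hne ltac:(unfold divdiff in Hdd; rewrite Hdd, Cmod_1; lra))
    as (j & Hj & Hlarge).
  set (G := cprod (others j I) (fun p => w j - w p)) in *.
  assert (HG : G <> 0).
  { apply cprod_neq0. intros p Hp. apply in_others in Hp.
    apply (Csub_neq0_of_injective w I); intuition. }
  exists j. repeat split; auto.
  rewrite Cmod_div in Hlarge by exact HG.
  assert (HGpos : (0 < Cmod G)%R) by (apply Cmod_gt_0; exact HG).
  apply Rmult_le_reg_r with (/ Cmod G)%R; [apply Rinv_0_lt_compat; lra|].
  rewrite Rinv_r by lra. unfold Rdiv in Hlarge. lra.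
Qed.

Lemma Cmod_isolated_term_lt (I J : list nat) (c w ch wh : nat -> C) (us : list C) (B : R) (j : nat) :
  NoDup I -> In j I -> length us = (length I - 1)%nat -> (forall i, In i J -> In (wh i) us) ->
  (forall z, In z us -> Cmod z <= 1)%R -> (forall p, In p I -> Cmod (w p) <= 1)%R ->
  (forall l, (l <= 2 * (length I - 1))%nat ->
     Cmod (csum I (fun p => c p * w p ^ l) - csum J (fun i => ch i * wh i ^ l))%C < B)%R ->
  (Cmod (c j * root_prod us (w j) * cprod (others j I) (fun p => w j - w p))%C
     < B * 4 ^ (length I - 1))%R.
Proof.
  intros Hnd Hj Hus HJ Hus1 Hw Hu.
  set (zs := us ++ map w (others j I)).
  assert (Hzs : length zs = (2 * (length I - 1))%nat)
    by (unfold zs; rewrite length_app, length_map, length_others; auto; lia).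
  pose proof (diff_ops_bound zs 0 B _ ltac:(rewrite Hzs; intros l Hl; apply Hu; exact Hl)
                0 (le_n 0)) as Hbound.
  rewrite (diff_ops_exp_sum_isolate zs I J c w ch wh j Hnd Hj) in Hbound.
  2:{ intros p Hp Hpj. apply in_or_app. right. apply in_map, in_others. auto. }
  2:{ intros i Hi. apply in_or_app. left. auto. }
  assert (Hweight : (root_weight zs <= 4 ^ (length I - 1))%R).
  { replace 4%R with (2 ^ 2)%R by ring. rewrite <- pow_mult, <- Hzs.
    apply root_weight_le_pow2. intros z Hz.
    apply in_app_or in Hz as [Hz|Hz]; [auto|].
    apply in_map_iff in Hz as (p & <- & Hp). apply in_others in Hp. apply Hw. tauto. }
  unfold zs in Hbound. rewrite root_prod_app, root_prod_map, Cmult_assoc in Hbound.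
  fold zs in Hbound.
  assert (HB : (0 <= B)%R) by (pose proof (Cmod_ge_0 (c j * root_prod us (w j)
    * cprod (others j I) (fun p => w j - w p))); pose proof (root_weight_pos zs); nra).
  eapply Rlt_le_trans; [exact Hbound|]. apply Rmult_le_compat_l; lra.
Qed.

Lemma exp_sum_coef_bound (I J : list nat) (c w ch wh : nat -> C) (B : R) :
  NoDup I -> injective_on w I -> I <> [] -> (length J < length I)%nat ->
  (forall p, In p I -> Cmod (w p) <= 1)%R -> (forall i, In i J -> Cmod (wh i) <= 1)%R ->
  (forall l, (l <= 2 * (length I - 1))%nat ->
     Cmod (csum I (fun p => c p * w p ^ l) - csum J (fun i => ch i * wh i ^ l))%C < B)%R ->
  exists j, In j I /\
    (Cmod (c j) * Cmod (cprod (others j I) (fun p => w j - w p)%C) ^ 2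
       < INR (length I) * B * 4 ^ (length I - 1))%R.
Proof.
  intros Hnd Hinj Hne HJ Hw Hwh Hu.
  set (us := map wh J ++ repeat (RtoC 0) (length I - 1 - length J)).
  assert (Hus : length us = (length I - 1)%nat)
    by (unfold us; rewrite length_app, length_map, repeat_length; lia).
  destruct (exists_node_root_prod_ge I w us Hnd Hinj Hne Hus) as (j & Hj & HG & HGle).
  pose proof (Cmod_isolated_term_lt I J c w ch wh us B j Hnd Hj Hus) as Hlt.
  rewrite !Cmod_mult in Hlt.
  specialize (Hlt ltac:(intros i Hi; apply in_or_app; left; apply in_map; exact Hi)).
  specialize (Hlt ltac:(intros z Hz; apply in_app_or in Hz as [Hz|Hz];
    [apply in_map_iff in Hz as (i & <- & Hi); auto|apply repeat_spec in Hz; subst; rewrite Cmod_0; lra])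
    Hw Hu).
  exists j. split; [exact Hj|].
  set (G := Cmod (cprod (others j I) (fun p => w j - w p)%C)) in *.
  assert (Hn : (0 < INR (length I))%R) by (apply lt_0_INR; destruct I; [congruence|simpl; lia]).
  pose proof (Cmod_ge_0 (c j)). pose proof (Cmod_ge_0 (root_prod us (w j))).
  assert (0 <= G)%R by apply Cmod_ge_0.
  apply Rle_lt_trans with (INR (length I) * (Cmod (c j) * Cmod (root_prod us (w j)) * G))%R.
  - replace (Cmod (c j) * G ^ 2)%R with (Cmod (c j) * G * G)%R by ring.
    replace (INR (length I) * (Cmod (c j) * Cmod (root_prod us (w j)) * G))%R
      with (Cmod (c j) * G * (INR (length I) * Cmod (root_prod us (w j))))%R by ring.
    apply Rmult_le_compat_l; [apply Rmult_le_pos|]; lra.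
  - rewrite (Rmult_assoc (INR (length I))). apply Rmult_lt_compat_l; lra.
Qed.

(** * Nodes on the unit circle *)

Lemma Cexpi_add (a b : R) : Cexpi (a + b) = Cexpi a * Cexpi b.
Proof. unfold Cexpi, Cmult. simpl. rewrite cos_plus, sin_plus. f_equal; ring. Qed.

Lemma Cexpi_pow (t : R) (l : nat) : Cexpi (INR l * t) = Cexpi t ^ l.
Proof.
  induction l as [|l IH]; [simpl; unfold Cexpi; rewrite Rmult_0_l, cos_0, sin_0; reflexivity|].
  rewrite S_INR. replace ((INR l + 1) * t)%R with (t + INR l * t)%R by ring.
  rewrite Cexpi_add, IH. reflexivity.
Qed.

Lemma Cmod_Cexpi (t : R) : Cmod (Cexpi t) = 1%R.
Proof.
  unfold Cmod, Cexpi. simpl. pose proof (sin2_cos2 t). unfold Rsqr in H.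
  replace (cos t * (cos t * 1) + sin t * (sin t * 1))%R with 1%R by lra. apply sqrt_1.
Qed.

(* |e^{ia} - e^{ib}| = 2 |sin((a - b)/2)|, then Jordan's inequality. *)
Lemma Cmod_Cexpi_sub_ge (a b : R) :
  (Rabs (a - b) <= PI)%R -> (2 / PI * Rabs (a - b) <= Cmod (Cexpi a - Cexpi b))%R.
Proof.
  intros Hab. pose proof PI_RGT_0.
  set (x := ((a - b) / 2)%R).
  assert (Habs : Rabs (a - b) = (2 * Rabs x)%R)
    by (unfold x; rewrite Rabs_div, (Rabs_right 2) by lra; field).
  rewrite Habs in *.
  pose proof (Rabs_sin_ge x ltac:(lra)) as Hs.
  assert (Hsq : (fst (Cexpi a - Cexpi b)%C ^ 2 + snd (Cexpi a - Cexpi b)%C ^ 2 = (2 * Rabs (sin x)) ^ 2)%R).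
  { rewrite Rpow_mult_distr, pow2_abs. unfold Cexpi. simpl.
    pose proof (sin2_cos2 a). pose proof (sin2_cos2 b). unfold Rsqr in *.
    assert (cos (a - b) = 1 - 2 * sin x * sin x)%R
      by (rewrite <- cos_2a_sin; unfold x; f_equal; field).
    rewrite cos_minus in H2. nra. }
  unfold Cmod. rewrite Hsq, sqrt_pow2 by (pose proof (Rabs_pos (sin x)); lra).
  replace (2 / PI * (2 * Rabs x))%R with (2 * (2 * Rabs x / PI))%R by (field; lra). lra.
Qed.

Lemma Cmod_cprod_Cexpi_sub_ge (t : nat -> R) (d : R) (j : nat) (L : list nat) :
  (0 < d)%R -> NoDup L -> ~ In j L -> separated t d (j :: L) ->
  (forall p, In p L -> Rabs (t p - t j) <= PI)%R ->
  ((d / PI) ^ length L * INR (Factorial.fact (length L))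
     <= Cmod (cprod L (fun p => Cexpi (t j) - Cexpi (t p))%C))%R.
Proof.
  intros Hd Hnd HjL Hsep Hclose. pose proof PI_RGT_0.
  rewrite Cmod_cprod.
  apply Rle_trans with (rprod L (fun p => 2 / PI * Rabs (t p - t j)))%R.
  - rewrite rprod_scale.
    replace (d / PI)%R with (2 / PI * (d / 2))%R by (field; lra).
    rewrite Rpow_mult_distr, Rmult_assoc. apply Rmult_le_compat_l.
    + apply pow_le. apply Rlt_le, Rdiv_lt_0_compat; lra.
    + apply rprod_dist_ge_fact; auto.
  - apply rprod_le_compat. intros p Hp. split.
    + apply Rmult_le_pos; [apply Rlt_le, Rdiv_lt_0_compat; lra|apply Rabs_pos].
    + rewrite Rabs_minus_sym. apply Cmod_Cexpi_sub_ge. rewrite Rabs_minus_sym. auto.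
Qed.

Lemma exp_sum_separation_bound (I J : list nat) (c ch : nat -> C) (t th : nat -> R) (B d : R) :
  NoDup I -> I <> [] -> (length J < length I)%nat -> (0 < d)%R -> separated t d I ->
  (forall p q, In p I -> In q I -> Rabs (t p - t q) <= PI)%R ->
  (forall l, (l <= 2 * (length I - 1))%nat ->
     Cmod (csum I (fun p => c p * Cexpi (t p) ^ l) - csum J (fun i => ch i * Cexpi (th i) ^ l))%C
       < B)%R ->
  exists j, In j I /\
    (Cmod (c j) * ((d / PI) ^ (length I - 1) * INR (Factorial.fact (length I - 1))) ^ 2
       < INR (length I) * B * 4 ^ (length I - 1))%R.
Proof.
  intros Hnd Hne HJ Hd Hsep Hclose Hu. pose proof PI_RGT_0.
  assert (Hinj : injective_on (fun p => Cexpi (t p)) I).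
  { intros p q Hp Hq Hpq. destruct (Nat.eq_dec p q) as [|Hne']; auto. exfalso.
    pose proof (Cmod_Cexpi_sub_ge (t p) (t q) (Hclose p q Hp Hq)) as Hc.
    cbv beta in Hpq. rewrite Hpq in Hc. replace (Cexpi (t q) - Cexpi (t q)) with (RtoC 0) in Hc by ring.
    rewrite Cmod_0 in Hc. pose proof (Hsep p q Hp Hq Hne').
    assert (0 < 2 / PI)%R by (apply Rdiv_lt_0_compat; lra). nra. }
  destruct (exp_sum_coef_bound I J c (fun p => Cexpi (t p)) ch (fun i => Cexpi (th i)) B
              Hnd Hinj Hne HJ) as (j & Hj & Hbound).
  - intros p _. rewrite Cmod_Cexpi. lra.
  - intros i _. rewrite Cmod_Cexpi. lra.
  - exact Hu.
  - exists j. split; auto. eapply Rle_lt_trans; [|exact Hbound].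
    apply Rmult_le_compat_l; [apply Cmod_ge_0|]. apply pow_incr. split.
    + apply Rmult_le_pos; [apply pow_le, Rlt_le, Rdiv_lt_0_compat; lra|apply pos_INR].
    + rewrite <- length_others with (j := j) by auto.
      apply Cmod_cprod_Cexpi_sub_ge; auto.
      * apply NoDup_filter. exact Hnd.
      * intros Hin. apply in_others in Hin. tauto.
      * intros p q Hp Hq Hpq. apply Hsep; auto.
        -- destruct Hp as [<-|Hp]; [auto|apply in_others in Hp; tauto].
        -- destruct Hq as [<-|Hq]; [auto|apply in_others in Hq; tauto].
      * intros p Hp. apply in_others in Hp. apply Hclose; tauto.
Qed.


(** * Subsampled Fourier data *)

Lemma noise_level_pos (M : nat) (W : nat -> Cx) (sigma : R) : (1 <= M)%nat ->
  (forall q, (1 <= q <= M)%nat -> Defs.Cmod (W q) < sigma)%R -> (0 < sigma)%R.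
Proof.
  intros HM HW. pose proof (HW 1%nat ltac:(lia)). pose proof (Cmod_ge_0 (W 1%nat)).
  unfold Defs.Cmod, Cmod in *. lra.
Qed.

Lemma mmin_le (n : nat) (a : nat -> Cx) (j : nat) :
  (1 <= j <= n)%nat -> (mmin n a <= Defs.Cmod (a j))%R.
Proof.
  intros Hj. unfold mmin.
  assert (Hin : In (Defs.Cmod (a j)) (map (fun j => Defs.Cmod (a j)) (seq 1 n)))
    by (apply (in_map (fun j => Defs.Cmod (a j))), in_seq; lia).
  induction (map (fun j => Defs.Cmod (a j)) (seq 1 n)) as [|v l IH]; [destruct Hin|].
  simpl. destruct Hin as [->|Hin]; [apply Rmin_l|].
  eapply Rle_trans; [apply Rmin_r|auto].
Qed.

Lemma mmin_pos (n : nat) (a : nat -> Cx) :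
  (1 <= n)%nat -> (forall j, (1 <= j <= n)%nat -> a j <> C0) -> (0 < mmin n a)%R.
Proof.
  intros Hn Ha. unfold mmin.
  assert (Hpos : forall j, (1 <= j <= n)%nat -> (0 < Defs.Cmod (a j))%R).
  { intros j Hj. apply Cmod_gt_0, Ha, Hj. }
  assert (Hl : forall v, In v (map (fun j => Defs.Cmod (a j)) (seq 1 n)) -> (0 < v)%R).
  { intros v Hv. apply in_map_iff in Hv as (j & <- & Hj). apply in_seq in Hj. apply Hpos. lia. }
  induction (map (fun j => Defs.Cmod (a j)) (seq 1 n)) as [|v l IH]; simpl; [apply Hpos; lia|].
  apply Rmin_glb_lt; [apply Hl; left; reflexivity|apply IH; intros v' Hv'; apply Hl; right; exact Hv'].
Qed.

Definition shifted_coef (b : nat -> Cx) (x : nat -> R) (om0 : R) (p : nat) : C :=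
  b p * Cexpi (x p * om0).

Lemma Cmod_shifted_coef (b : nat -> Cx) (x : nat -> R) (om0 : R) (p : nat) :
  Cmod (shifted_coef b x om0 p) = Defs.Cmod (b p).
Proof. unfold shifted_coef. rewrite Cmod_mult, Cmod_Cexpi. apply Rmult_1_r. Qed.

Lemma fourier_arith_progression (k : nat) (b : nat -> Cx) (x : nat -> R) (om0 H : R) (l : nat) :
  fourier k b x (om0 + INR l * H) =
  csum (seq 1 k) (fun p => shifted_coef b x om0 p * Cexpi (x p * H) ^ l).
Proof.
  apply csum_ext. intros p _. unfold shifted_coef.
  change (Cmul (b p) ?z) with (b p * z).
  rewrite <- Cexpi_pow, <- Cmult_assoc, <- Cexpi_add. do 2 f_equal. ring.
Qed.

(* Every s-th sample, with s*2(n-1) <= M-1 < 2*s*2(n-1): the 2n-1 subsamples fit into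
   the M samples, and the coarse step H = s h satisfies (n-1) H <= Om <= 2(n-1) H. *)
Lemma exists_subsample_step (n M : nat) (Om : R) : (2 <= n)%nat -> (2 * n < M)%nat -> (0 < Om)%R ->
  exists (s : nat) (H : R), (0 < H)%R /\ (INR (n - 1) * H <= Om <= 2 * INR (n - 1) * H)%R /\
    forall l, (l <= 2 * (n - 1))%nat ->
      (1 <= 1 + l * s <= M)%nat /\ omega_q Om M (1 + l * s) = (- Om + INR l * H)%R.
Proof.
  intros Hn HM HOm.
  set (K := (2 * (n - 1))%nat).
  set (s := ((M - 1) / K)%nat).
  assert (Hs : (1 <= s /\ s * K <= M - 1 < 2 * s * K)%nat).
  { pose proof (Nat.div_mod (M - 1) K ltac:(unfold K; lia)).
    pose proof (Nat.mod_upper_bound (M - 1) K ltac:(unfold K; lia)).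
    fold s in H. assert (1 <= s)%nat by (destruct s; unfold K in *; nia). nia. }
  assert (HMr : (0 < INR M - 1)%R) by (pose proof (lt_INR 1 M ltac:(lia)); simpl in *; lra).
  assert (HsK : (INR s * INR K <= INR M - 1 < 2 * INR s * INR K)%R).
  { replace (INR M - 1)%R with (INR (M - 1)) by (rewrite minus_INR by lia; reflexivity).
    replace 2%R with (INR 2) by reflexivity.
    rewrite <- !mult_INR. split; [apply le_INR|apply lt_INR]; lia. }
  assert (HK : INR K = (2 * INR (n - 1))%R) by (unfold K; rewrite mult_INR; reflexivity).
  exists s, (INR s * (2 * Om / (INR M - 1)))%R.
  assert (Hs1 : (1 <= INR s)%R) by (apply (le_INR 1); lia).
  repeat split.
  - apply Rmult_lt_0_compat; [lra|apply Rdiv_lt_0_compat; lra].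
  - apply Rmult_le_reg_r with (INR M - 1)%R; [lra|].
    replace (INR (n - 1) * (INR s * (2 * Om / (INR M - 1))) * (INR M - 1))%R
      with (INR s * INR K * Om)%R by (rewrite HK; field; lra). nra.
  - apply Rmult_le_reg_r with (INR M - 1)%R; [lra|].
    replace (2 * INR (n - 1) * (INR s * (2 * Om / (INR M - 1))) * (INR M - 1))%R
      with (2 * INR s * INR K * Om)%R by (rewrite HK; field; lra). nra.
  - lia.
  - intros. nia.
  - unfold omega_q. rewrite plus_INR, mult_INR. simpl. field. lra.
Qed.

Lemma subsampled_diff_lt (n M k : nat) (Om sigma H : R) (s : nat) (a ah : nat -> Cx)
  (y yh : nat -> R) (W Y : nat -> Cx) :
  (forall q, (1 <= q <= M)%nat -> Y q = Cadd (fourier n a y (omega_q Om M q)) (W q)) ->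
  (forall q, (1 <= q <= M)%nat -> Defs.Cmod (W q) < sigma)%R ->
  admissible Om M Y sigma k ah yh ->
  (forall l, (l <= 2 * (n - 1))%nat ->
     (1 <= 1 + l * s <= M)%nat /\ omega_q Om M (1 + l * s) = (- Om + INR l * H)%R) ->
  forall l, (l <= 2 * (length (seq 1 n) - 1))%nat ->
    (Cmod (csum (seq 1 n) (fun p => shifted_coef a y (- Om) p * Cexpi (y p * H) ^ l)
           - csum (seq 1 k) (fun i => shifted_coef ah yh (- Om) i * Cexpi (yh i * H) ^ l))%C
       < 2 * sigma)%R.
Proof.
  intros HY HW Hadm Hsub l Hl. rewrite length_seq in Hl.
  destruct (Hsub l Hl) as [Hq Hom].
  rewrite <- !fourier_arith_progression, <- Hom.
  pose proof (Hadm _ Hq) as Hhat. pose proof (HW _ Hq) as Hnoise. pose proof (HY _ Hq) as HYq.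
  set (q := (1 + l * s)%nat) in *.
  change (Cmod (fourier k ah yh (omega_q Om M q) - Y q) < sigma)%R in Hhat.
  change (Cmod (W q) < sigma)%R in Hnoise.
  change (Y q = fourier n a y (omega_q Om M q) + W q) in HYq.
  replace (fourier n a y (omega_q Om M q) - fourier k ah yh (omega_q Om M q))
    with (- (fourier k ah yh (omega_q Om M q) - Y q) + - W q) by (rewrite HYq; ring).
  eapply Rle_lt_trans; [apply Cmod_triangle|]. rewrite !Cmod_opp. lra.
Qed.

Local Close Scope C_scope.

Lemma scaled_nodes_separated (n : nat) (y : nat -> R) (H d : R) : 0 < H ->
  (forall p j, (1 <= p <= n)%nat -> (1 <= j <= n)%nat -> p <> j -> Rabs (y p - y j) >= d) ->
  separated (fun p => y p * H) (H * d) (seq 1 n).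
Proof.
  intros HH Hsep p q Hp Hq Hpq. apply in_seq in Hp, Hq.
  replace (y p * H - y q * H) with ((y p - y q) * H) by ring.
  rewrite Rabs_mult, (Rabs_right H) by lra.
  pose proof (Hsep p q ltac:(lia) ltac:(lia) Hpq). nra.
Qed.

Lemma scaled_nodes_spread (n : nat) (y : nat -> R) (Om H : R) : 0 < Om -> 0 < H ->
  INR (n - 1) * H <= Om -> (1 <= n)%nat ->
  (forall j, (1 <= j <= n)%nat -> - (INR n - 1) * PI / (2 * Om) <= y j <= (INR n - 1) * PI / (2 * Om)) ->
  forall p q, In p (seq 1 n) -> In q (seq 1 n) -> Rabs (y p * H - y q * H) <= PI.
Proof.
  intros HOm HH HHOm Hn Hy p q Hp Hq. apply in_seq in Hp, Hq.
  rewrite minus_INR in HHOm by lia. simpl in HHOm.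
  pose proof (Hy p ltac:(lia)). pose proof (Hy q ltac:(lia)). pose proof PI_RGT_0.
  set (r := (INR n - 1) * PI / (2 * Om)) in *.
  replace (- (INR n - 1) * PI / (2 * Om)) with (- r) in * by (unfold r; field; lra).
  assert (Hr : 2 * r * H <= PI).
  { unfold r. apply Rmult_le_reg_r with Om; [lra|].
    replace (2 * ((INR n - 1) * PI / (2 * Om)) * H * Om) with (PI * ((INR n - 1) * H)) by (field; lra).
    apply Rmult_le_compat_l; lra. }
  replace (y p * H - y q * H) with ((y p - y q) * H) by ring.
  rewrite Rabs_mult, (Rabs_right H) by lra.
  apply Rle_trans with (2 * r * H); [|exact Hr].
  apply Rmult_le_compat_r; [lra|]. apply Rabs_le. split; lra.
Qed.

Lemma separation_radius_pos (Om x y : R) : 0 < Om -> 0 < 4.4 * PI * exp 1 / Om * Rpower x y.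
Proof.
  intros HOm. pose proof PI_RGT_0. pose proof (exp_pos 1). unfold Rpower.
  apply Rmult_lt_0_compat; [|apply exp_pos].
  apply Rdiv_lt_0_compat; [|lra]. apply Rmult_lt_0_compat; [lra|]. lra.
Qed.

Lemma Rpower_inv_pow (x : R) (k : nat) : 0 < x -> (0 < k)%nat -> Rpower x (1 / INR k) ^ k = x.
Proof.
  intros Hx Hk. assert (0 < INR k) by (apply lt_0_INR; exact Hk).
  rewrite <- Rpower_pow by (unfold Rpower; apply exp_pos).
  rewrite Rpower_mult. replace (1 / INR k * INR k) with 1 by (field; lra). apply Rpower_1, Hx.
Qed.

(* Since H >= Om / (2(n-1)), the base H d / PI of the node-product bound is at least
   2.2 e rho / (n-1), and m rho^(2(n-1)) = sigma. *)
Lemma separation_numeric (n : nat) (m sigma Om H : R) :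
  (2 <= n)%nat -> 0 < m -> 0 < sigma -> 0 < Om -> Om <= 2 * INR (n - 1) * H ->
  INR n * (2 * sigma) * 4 ^ (n - 1) <=
  m * ((H * (4.4 * PI * exp 1 / Om * Rpower (sigma / m) (1 / (2 * INR n - 2))) / PI) ^ (n - 1)
       * INR (Factorial.fact (n - 1))) ^ 2.
Proof.
  intros Hn Hm Hsig HOm HH.
  replace 4.4 with (44/10) by lra.
  set (k := (n - 1)%nat) in *.
  assert (Hk : (1 <= k)%nat) by (unfold k; lia).
  assert (Hkr : 0 < INR k) by (apply lt_0_INR; lia).
  assert (Hnk : INR n = INR k + 1) by (unfold k; rewrite minus_INR by lia; simpl; lra).
  set (rho := Rpower (sigma / m) (1 / (2 * INR n - 2))).
  assert (Hrho : 0 < rho) by (unfold rho, Rpower; apply exp_pos).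
  assert (Hrho_pow : m * rho ^ (2 * k) = sigma).
  { unfold rho. replace (2 * INR n - 2) with (INR (2 * k)) by (rewrite mult_INR, Hnk; simpl; ring).
    rewrite Rpower_inv_pow; [field; lra|apply Rdiv_lt_0_compat; lra|lia]. }
  pose proof PI_RGT_0. pose proof (exp_pos 1).
  set (base := 22/10 * exp 1 / INR k).
  assert (Hbase : 0 <= base * rho).
  { unfold base. apply Rmult_le_pos; [|lra]. apply Rmult_le_pos; [lra|].
    apply Rlt_le, Rinv_0_lt_compat; lra. }
  assert (Hstep : base * rho <= H * (44/10 * PI * exp 1 / Om * rho) / PI).
  { unfold base. replace (H * (44/10 * PI * exp 1 / Om * rho) / PI)
      with ((2 * INR k * H) * (22/10 * exp 1 * rho) / (INR k * Om)) by (field; lra).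
    replace (22 / 10 * exp 1 / INR k * rho) with (Om * (22/10 * exp 1 * rho) / (INR k * Om))
      by (field; lra).
    apply Rmult_le_compat_r; [apply Rlt_le, Rinv_0_lt_compat; nra|].
    apply Rmult_le_compat_r; nra. }
  apply Rle_trans with (m * ((base * rho) ^ k * INR (Factorial.fact k)) ^ 2).
  - replace (m * ((base * rho) ^ k * INR (Factorial.fact k)) ^ 2)
      with (m * rho ^ (2 * k) * (base ^ (2 * k) * INR (Factorial.fact k) ^ 2)).
    2:{ rewrite (Rpow_mult_distr base rho k). replace (2 * k)%nat with (k * 2)%nat by lia.
        rewrite !pow_mult. ring. }
    rewrite Hrho_pow, Hnk.
    pose proof (succ_four_pow_le_fact_sq k Hk) as Hnum. rewrite plus_INR in Hnum. change (INR 1) with 1 in Hnum.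
    apply Rmult_le_compat_l with (r := sigma) in Hnum; [|lra].
    fold base in Hnum. lra.
  - apply Rmult_le_compat_l; [lra|]. apply pow_incr. split.
    + apply Rmult_le_pos; [apply pow_le; exact Hbase|apply pos_INR].
    + apply Rmult_le_compat_r; [apply pos_INR|]. apply pow_incr. lra.
Qed.

End SuperResolution.

Import SuperResolution.

Theorem theorem2p1
  (n M : nat) (Om sigma : R) (a : nat -> Cx) (y : nat -> R) (W Y : nat -> Cx)
  (Hn : (2 <= n)%nat) (HM : (2 * n < M)%nat) (HOm : 0 < Om)
  (Ha : forall j, (1 <= j <= n)%nat -> a j <> C0)
  (Hy_dist : forall p j, (1 <= p <= n)%nat -> (1 <= j <= n)%nat -> p <> j -> y p <> y j)
  (Hy_int : forall j, (1 <= j <= n)%nat ->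
      - (INR n - 1) * PI / (2 * Om) <= y j <= (INR n - 1) * PI / (2 * Om))
  (HY : forall q, (1 <= q <= M)%nat -> Y q = Cadd (fourier n a y (omega_q Om M q)) (W q))
  (HW : forall q, (1 <= q <= M)%nat -> Cmod (W q) < sigma)
  (Hsep : forall p j, (1 <= p <= n)%nat -> (1 <= j <= n)%nat -> p <> j ->
      Rabs (y p - y j) >=
        4.4 * PI * exp 1 / Om * Rpower (sigma / mmin n a) (1 / (2 * INR n - 2))) :
  ~ (exists (k : nat) (ah : nat -> Cx) (yh : nat -> R),
        (k < n)%nat /\ admissible Om M Y sigma k ah yh).
Proof.
  intros (k & ah & yh & Hk & Hadm).
  pose proof (noise_level_pos M W sigma ltac:(lia) HW) as Hsig.
  pose proof (mmin_pos n a ltac:(lia) Ha) as Hm.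
  destruct (exists_subsample_step n M Om Hn HM HOm) as (s & H & HH & [HHlo HHhi] & Hsub).
  set (d := 4.4 * PI * exp 1 / Om * Rpower (sigma / mmin n a) (1 / (2 * INR n - 2))) in Hsep.
  destruct (exp_sum_separation_bound (seq 1 n) (seq 1 k)
              (shifted_coef a y (- Om)) (shifted_coef ah yh (- Om))
              (fun p => y p * H) (fun i => yh i * H) (2 * sigma) (H * d)) as (j & Hj & Hbound).
  - apply seq_NoDup.
  - destruct n; [lia|discriminate].
  - rewrite !length_seq. exact Hk.
  - apply Rmult_lt_0_compat; [exact HH|apply separation_radius_pos, HOm].
  - exact (scaled_nodes_separated n y H d HH Hsep).
  - exact (scaled_nodes_spread n y Om H HOm HH HHlo ltac:(lia) Hy_int).
  - exact (subsampled_diff_lt n M k Om sigma H s a ah y yh W Y HY HW Hadm Hsub).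
  - apply in_seq in Hj. rewrite length_seq, Cmod_shifted_coef in Hbound.
    pose proof (mmin_le n a j ltac:(lia)) as Hmj.
    pose proof (separation_numeric n (mmin n a) sigma Om H Hn Hm Hsig HOm HHhi) as Hnum.
    fold d in Hnum.
    set (X := ((H * d / PI) ^ (n - 1) * INR (Factorial.fact (n - 1))) ^ 2) in *.
    assert (0 <= X) by (unfold X; apply pow2_ge_0).
    nra.
Qed.
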